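(* Let $k\ge 2$ and let $G$ be a $k$-uniform hypergraph on $[n]$, and let $S$ be a spanning $k$-star on $[n]$ (the family of all $k$-subsets of $[n]$ containing a fixed vertex $v$). Then: (i) $G$ dominates $S$ if and only if $\tilde H_{k-2}(K(G);\mathbb{Q})=0$; (ii) $S$ dominates $G$ if and only if $\tilde H_{k-1}(K(G);\mathbb{Q})=0$.
   Context: Let $X=(x_{ij})_{1\le i,j\le n}$ be a matrix of $n^2$ independent indeterminates over $\mathbb{Q}$, and $C_k(X)=(c_{S,T})$ its $k$-th compound matrix, indexed by $k$-subsets of $[n]$, with $c_{S,T}=\det(x_{ij})_{i\in S,j\in T}$ in $\mathbb{Q}(x_{ij})$. For families $F_1,F_2$ of $k$-subsets of $[n]$, $F_1$ dominates $F_2$ if the submatrix of $C_k(X)$ with rows indexed by $F_2$ and columns indexed by $F_1$ has rank $|F_2|$. For a $k$-uniform hypergraph $G$ on $[n]$, $K(G)$ is the $(k-1)$-dimensional simplicial complex on $[n]$ whose $(k-1)$-faces are the edges of $G$ and which contains all subsets of $[n]$ of size at most $k-1$ (complete $(k-2)$-skeleton). $\tilde H_i(\cdot;\mathbb{Q})$ denotes reduced rational homology. *)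

From HB Require Import structures.
From mathcomp Require Import all_boot all_order all_algebra fraction.
Set Implicit Arguments. Unset Strict Implicit. Unset Printing Implicit Defensive.
Import Order.TTheory GRing.Theory Num.Theory.
Local Open Scope ring_scope.

Fixpoint mpolyT (m : nat) : idomainType :=
  if m is m'.+1 then ({poly mpolyT m'} : idomainType) else (rat : idomainType).

(* the variable y_l of Q[y_0..y_{m-1}] (0 if l >= m) *)
Fixpoint mvar (m : nat) (l : nat) : mpolyT m :=
  match m return mpolyT m with
  | 0 => 0
  | m'.+1 => if l == m' then ('X : {poly mpolyT m'}) else (mvar m' l)%:P
  end.

(* The field Q(x_ij : 1 <= i,j <= n) of rational functions in n^2 indeterminates;
   x_ij (0-based indices i, j < n) is the variable y_(i*n+j). *)
Definition ratfun (n : nat) : fieldType := {fraction (mpolyT (n * n))}.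

Definition xvar (n : nat) (i j : nat) : ratfun n := @FracField.tofrac (mpolyT (n * n)) (mvar (n * n) (i * n + j)).

(* entry c_{S,T} = det (x_ij)_{i in S, j in T}, rows/columns in increasing order *)
Definition compound_entry (n k : nat) (S T : {set 'I_n}) : ratfun n :=
  \det (\matrix_(i < k, j < k)
          xvar n (nth 0%N (map val (enum S)) i) (nth 0%N (map val (enum T)) j)).

Definition compound_submx (n k : nat) (F2 F1 : {set {set 'I_n}}) :
  'M[ratfun n]_(#|F2|, #|F1|) :=
  \matrix_(i < #|F2|, j < #|F1|) compound_entry k (enum_val i) (enum_val j).

Definition dominates (n k : nat) (F1 F2 : {set {set 'I_n}}) : Prop :=
  \rank (compound_submx k F2 F1) = #|F2|.

Definition kstar (n k : nat) (v : 'I_n) : {set {set 'I_n}} :=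
  [set s : {set 'I_n} | (#|s| == k) && (v \in s)].

(* A simplicial complex on [n] is given by its set of faces (including the empty face,
   which yields reduced homology). *)

Definition KG (n k : nat) (G : {set {set 'I_n}}) : {set {set 'I_n}} :=
  [set s : {set 'I_n} | (#|s| <= k.-1)%N || (s \in G)].

Definition faces_card (n : nat) (K : {set {set 'I_n}}) (m : nat) : {set {set 'I_n}} :=
  [set s in K | #|s| == m].

(* oriented incidence coefficient [s : t] for t a facet of s: (-1)^(position of the
   removed vertex in s, ordered increasingly) *)
Definition incidence (n : nat) (s t : {set 'I_n}) : rat :=
  if t \subset s then (-1) ^+ #|[set u in s | [exists w in s :\: t, (u < w)%N]]| else 0.

(* boundary map d_d : C_d -> C_{d-1} (d-faces have d+1 vertices), as a matrix acting
   on row vectors; for d = 0 the target is spanned by the empty face (augmentation). *)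
Definition boundary (n : nat) (K : {set {set 'I_n}}) (d : nat) :
  'M[rat]_(#|faces_card K d.+1|, #|faces_card K d|) :=
  \matrix_(i < #|faces_card K d.+1|, j < #|faces_card K d|)
     incidence (enum_val i) (enum_val j).

(* dim_Q of reduced homology H~_d(K; Q) = ker d_d / im d_{d+1} *)
Definition rbetti (n : nat) (K : {set {set 'I_n}}) (d : nat) : nat :=
  \rank (kermx (boundary K d) :\: boundary K d.+1)%MS.

From HB Require Import structures.
From mathcomp Require Import all_boot all_order all_algebra fraction.
From mathcomp Require Import ring.
Set Implicit Arguments. Unset Strict Implicit. Unset Printing Implicit Defensive.
Import Order.TTheory GRing.Theory Num.Theory.
Local Open Scope ring_scope.
Local Notation tofrac := (@FracField.tofrac _).

(* Write [k = m + 2] and let [B] be the rational boundary matrix of [K(G)] from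
   the edges of [G] to the [(m+1)]-subsets of [[n]]. Since [K(G)] has a complete
   [m]-skeleton, its [m]-cycles are those of the full simplex, a space of dimension
   [|S|] (the boundaries of the faces in [S] form a basis, a cycle being determined
   by its coefficients on the faces avoiding [v]). Hence
   [dim H_(k-2) = |S| - rank B] and [dim H_(k-1) = |G| - rank B].
   On the other side, the submatrix of [C_k(X)] on [S * G] has rank exactly
   [rank B]: expanding each minor along row [v] factors it through [B^T] up to
   invertible diagonal scalings, while specialising [X] to the identity with row
   [v] replaced by ones turns it into [+-B] restricted to the faces avoiding [v],
   and specialisation cannot increase the rank. As [C_k(X)^T = C_k(X^T)], the same
   holds on [G * S]. *)

Fixpoint mconst (m : nat) : rat -> mpolyT m :=
  match m return rat -> mpolyT m with
  | 0 => id
  | m'.+1 => fun x => (mconst m' x)%:P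
  end.

Lemma mconst_is_zmod_morphism m : zmod_morphism (mconst m).
Proof. by elim: m => [|m IH] x y //=; rewrite IH polyCB. Qed.

Lemma mconst_is_monoid_morphism m : monoid_morphism (mconst m).
Proof. by elim: m => [|m [IH1 IH2]] //=; split=> [|x y]; rewrite ?IH1 ?IH2 ?polyCM. Qed.

HB.instance Definition _ m :=
  GRing.isZmodMorphism.Build _ _ (mconst m) (mconst_is_zmod_morphism m).
HB.instance Definition _ m :=
  GRing.isMonoidMorphism.Build _ _ (mconst m) (mconst_is_monoid_morphism m).

Fixpoint meval (a : nat -> rat) (m : nat) : mpolyT m -> rat :=
  match m return mpolyT m -> rat with
  | 0 => id
  | m'.+1 => fun p => (map_poly (@meval a m') p).[a m']
  end.

Lemma meval_is_rmorphism a m :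
  zmod_morphism (@meval a m) /\ monoid_morphism (@meval a m).
Proof.
elim: m => [|m [IH1 IH2]] //=.
pose e : {rmorphism mpolyT m -> rat} := HB.pack (@meval a m)
  (GRing.isZmodMorphism.Build _ _ _ IH1) (GRing.isMonoidMorphism.Build _ _ _ IH2).
rewrite -[@meval a m]/(e : _ -> _).
split=> [p q|]; first by rewrite rmorphB hornerD hornerN.
by split=> [|p q]; rewrite ?rmorph1 ?hornerC // rmorphM hornerM.
Qed.

HB.instance Definition _ a m :=
  GRing.isZmodMorphism.Build _ _ (@meval a m) (meval_is_rmorphism a m).1.
HB.instance Definition _ a m :=
  GRing.isMonoidMorphism.Build _ _ (@meval a m) (meval_is_rmorphism a m).2.

Lemma meval_mvar a m l : (l < m)%N -> meval a (mvar m l) = a l.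
Proof.
elim: m => [|m IH] //=; rewrite ltnS leq_eqVlt.
case: eqP => [-> _|_ /= lt_lm]; first by rewrite map_polyX hornerX.
by rewrite map_polyC hornerC; apply: IH.
Qed.

Section Incidence.
Variable n : nat.
Implicit Types (s t u : {set 'I_n}) (a b c : 'I_n).

Definition set_pos s a : nat := #|[set x in s | (x < a)%N]|.

Lemma card_setD1 s a : a \in s -> #|s :\ a| = #|s|.-1.
Proof. by move=> a_s; rewrite (cardsD1 a s) a_s. Qed.

Lemma incidence_eq0 s t : ~~ (t \subset s) -> incidence s t = 0.
Proof. by rewrite /incidence => /negPf ->. Qed.

Lemma incidence_facet s t c :
  t \subset s -> s :\: t = [set c] -> incidence s t = (-1) ^+ set_pos s c.
Proof.
move=> ts stc; rewrite /incidence ts stc; congr (_ ^+ _).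
apply: eq_card => x; rewrite !inE; congr (_ && _).
apply/existsP/idP => [[w]|]; first by rewrite inE => /andP[/eqP-> ->].
by exists c; rewrite inE eqxx.
Qed.

Lemma incidence_D1 s c : c \in s -> incidence s (s :\ c) = (-1) ^+ set_pos s c.
Proof.
move=> cs; apply: incidence_facet; first exact: subsetDl.
by rewrite setDDr setDv set0U; apply/setIidPr; rewrite sub1set.
Qed.

Lemma facetP s t :
  t \subset s -> #|s| = #|t|.+1 -> exists2 c, c \in s & t = s :\ c.
Proof.
move=> ts cs; have /cards1P[c stc] : #|s :\: t| == 1%N.
  by rewrite cardsD (setIidPr ts) cs subSnn.
have /setDP[cs' ct] : c \in s :\: t by rewrite stc set11.
exists c => //; apply/eqP.
by rewrite eqEcard subsetD1 ts ct /= card_setD1 // cs.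
Qed.

Lemma incidence_sum s t : #|s| = #|t|.+1 ->
  incidence s t = \sum_(c in s) (-1) ^+ set_pos s c * (t == s :\ c)%:R.
Proof.
move=> cs; have [ts|nts] := boolP (t \subset s); last first.
  rewrite incidence_eq0 // big1 // => c _.
  by case: eqP nts => [->|]; rewrite ?subsetDl ?mulr0.
have [c cs' ->] := facetP ts cs.
rewrite incidence_D1 // (bigD1 c) //= eqxx mulr1 big1 ?addr0 // => b /andP[bs nbc].
case: eqP => [/setP/(_ b)|]; last by rewrite mulr0.
by rewrite !inE bs eqxx (negPf nbc).
Qed.

Lemma set_pos_D1_lt s a b :
  a \in s -> (a < b)%N -> set_pos (s :\ a) b = (set_pos s b).-1.
Proof.
move=> as_ ab; rewrite /set_pos (cardsD1 a [set x in s | (x < b)%N]) inE as_ ab.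
by congr (_.+1.-1); apply: eq_card => x; rewrite !inE; case: (x == a).
Qed.

Lemma set_pos_D1_gt s a b : (a < b)%N -> set_pos (s :\ b) a = set_pos s a.
Proof.
move=> ab; apply: eq_card => x; rewrite !inE.
by case: (x =P b) => [->|] //=; rewrite ltnNge ltnW ?andbF.
Qed.

Lemma sign_facets_pair s a b : a \in s -> (a < b)%N ->
  (-1) ^+ set_pos s a * (-1) ^+ set_pos (s :\ a) b
  + (-1) ^+ set_pos s b * (-1) ^+ set_pos (s :\ b) a = 0 :> rat.
Proof.
move=> as_ ab; rewrite set_pos_D1_lt // set_pos_D1_gt //.
have : (0 < set_pos s b)%N by apply/card_gt0P; exists a; rewrite inE as_.
by case: (set_pos s b) => // p _; rewrite exprS /=; ring.
Qed.

Lemma sum_incidence_facets (A : {set {set 'I_n}}) s (g : {set 'I_n} -> rat) :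
  (forall t, (t \in A) = (#|t|.+1 == #|s|)) ->
  \sum_(t in A) incidence s t * g t = \sum_(c in s) (-1) ^+ set_pos s c * g (s :\ c).
Proof.
move=> Adef; rewrite (eq_bigr (fun t => \sum_(c in s)
  (-1) ^+ set_pos s c * (t == s :\ c)%:R * g t)) => [|t]; last first.
  by rewrite Adef => /eqP/esym/incidence_sum->; rewrite big_distrl.
rewrite exchange_big; apply: eq_bigr => c c_s.
rewrite (bigD1 (s :\ c)) /=; last by rewrite Adef (cardsD1 c s) c_s.
by rewrite eqxx mulr1 big1 ?addr0 // => t /andP[_ /negPf->]; rewrite mulr0 mul0r.
Qed.

Lemma sum_facets_incidence_eq0 s u : #|s| = #|u|.+2 ->
  \sum_(c in s) (-1) ^+ set_pos s c * incidence (s :\ c) u = 0.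
Proof.
move=> cs; have [us|nus] := boolP (u \subset s); last first.
  rewrite big1 // => c _; rewrite incidence_eq0 ?mulr0 //.
  by apply: contra nus => /subset_trans->; rewrite ?subsetDl.
have /cards2P[a [b [nab sub]]] : #|s :\: u| == 2%N.
  by rewrite cardsD (setIidPr us) cs -addn2 addKn.
wlog ab : a b nab sub / (a < b)%N.
  move=> W; case: (ltngtP a b) => [|ba|/val_inj eab]; first exact: W.
    by apply: (W b a); rewrite 1?eq_sym // setUC.
  by rewrite eab eqxx in nab.
have facet c d : c != d -> s :\: u = [set c; d] ->
    incidence (s :\ c) u = (-1) ^+ set_pos (s :\ c) d.
  move=> ncd scd; have /setDP[_ cu] : c \in s :\: u by rewrite scd set21.
  apply: incidence_facet; first by rewrite subsetD1 us.
  by rewrite setDDl setUC -setDDl scd setU1K // in_set1.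
rewrite (big_setID (s :\: u)) /= (setIidPr (subsetDl _ _)) [X in _ + X]big1 ?addr0.
  rewrite sub big_setU1 ?in_set1 //= big_set1 (facet a b) //.
  rewrite (facet b a) 1?eq_sym 1?setUC //.
  by apply: sign_facets_pair => //; have /setDP[] : a \in s :\: u by rewrite sub set21.
move=> c /setDP[c_s]; rewrite inE c_s andbT negbK => cu.
by rewrite incidence_eq0 ?mulr0 // subsetD1 cu andbF.
Qed.

End Incidence.

Definition setmx (R : Type) (T1 T2 : finType) (A : {set T1}) (B : {set T2})
    (f : T1 -> T2 -> R) : 'M[R]_(#|A|, #|B|) :=
  \matrix_(i, j) f (enum_val i) (enum_val j).

Section SetMatrix.
Variables (T1 T2 T3 : finType) (A : {set T1}) (B : {set T2}) (C : {set T3}).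

Lemma mulmx_setmx (R : pzSemiRingType) (f : T1 -> T2 -> R) (g : T2 -> T3 -> R) :
  setmx A B f *m setmx B C g = setmx A C (fun a c => \sum_(b in B) f a b * g b c).
Proof.
apply/matrixP=> i j; rewrite !mxE (big_enum_val (fun b => f _ b * g b _)).
by apply: eq_bigr => l _; rewrite !mxE.
Qed.

Lemma trmx_setmx (R : Type) (f : T1 -> T2 -> R) :
  (setmx A B f)^T = setmx B A (fun b a => f a b).
Proof. by apply/matrixP=> i j; rewrite !mxE. Qed.

Lemma map_setmx (R S : Type) (f : T1 -> T2 -> R) (h : R -> S) :
  map_mx h (setmx A B f) = setmx A B (fun a b => h (f a b)).
Proof. by apply/matrixP=> i j; rewrite !mxE. Qed.

Lemma eq_setmx (R : Type) (f g : T1 -> T2 -> R) :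
  {in A & B, f =2 g} -> setmx A B f = setmx A B g.
Proof. by move=> fg; apply/matrixP=> i j; rewrite !mxE fg ?enum_valP. Qed.

Lemma mxrank_setmx_scale (F : fieldType) (f : T1 -> T2 -> F) (d1 : T1 -> F) (d2 : T2 -> F) :
  (\rank (setmx A B (fun a b => (d1 a * f a b * d2 b)%R)) <= \rank (setmx A B f))%N.
Proof.
have -> : setmx A B (fun a b => d1 a * f a b * d2 b) =
    diag_mx (\row_i d1 (enum_val i)) *m setmx A B f *m diag_mx (\row_j d2 (enum_val j)).
  by apply/matrixP=> i j; rewrite mul_mx_diag mul_diag_mx !mxE.
exact: leq_trans (mxrankM_maxl _ _) (mxrankM_maxr _ _).
Qed.

End SetMatrix.

Lemma sum_mul_delta (T : finType) (R : pzSemiRingType) (A : {set T}) (a : T) (g : T -> R) :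
  a \in A -> \sum_(x in A) g x * (x == a)%:R = g a.
Proof.
move=> aA; rewrite (bigD1 a) //= eqxx mulr1 big1 ?addr0 // => x /andP[_ /negPf->].
by rewrite mulr0.
Qed.

Definition ksets (n m : nat) : {set {set 'I_n}} := [set s : {set 'I_n} | #|s| == m].

Lemma incidence_mulmx_eq0 n m (A : {set {set 'I_n}}) : {subset A <= ksets n m.+2} ->
  setmx A (ksets n m.+1) (@incidence n) *m setmx (ksets n m.+1) (ksets n m) (@incidence n) = 0.
Proof.
move=> A_sub; apply/matrixP=> i j; rewrite mulmx_setmx !mxE.
have /A_sub := enum_valP i; have := enum_valP j; rewrite !inE => /eqP cu /eqP cs.
rewrite (sum_incidence_facets (fun t => incidence t _)) => [|t]; last by rewrite !inE cs.
by apply: sum_facets_incidence_eq0; rewrite cs cu.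
Qed.

Lemma boundaryE n (K : {set {set 'I_n}}) d :
  boundary K d = setmx (faces_card K d.+1) (faces_card K d) (@incidence n).
Proof. by []. Qed.

Section SimplexCycles.
Variables (n m : nat) (v : 'I_n).
Local Notation star := (kstar m.+2 v).
Local Notation boundary_simplex := (setmx (ksets n m.+1) (ksets n m) (@incidence n)).

Lemma kstarP (S : {set 'I_n}) : S \in star -> #|S| = m.+2 /\ v \in S.
Proof. by rewrite inE => /andP[/eqP]. Qed.

Lemma card_kstar_D1 (S : {set 'I_n}) : S \in star -> #|S :\ v| = m.+1.
Proof. by case/kstarP=> cS vS; rewrite card_setD1 // cS. Qed.

(* [z *m star_proj] lists the coefficients of the chain [z] on the faces avoiding [v]. *)
Definition star_proj : 'M[rat]_(#|ksets n m.+1|, #|star|) :=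
  setmx (ksets n m.+1) star (fun F S => (F == S :\ v)%:R).

Lemma star_proj_inj (z : 'rV[rat]_#|ksets n m.+1|) :
  z *m boundary_simplex = 0 -> z *m star_proj = 0 -> z = 0.
Proof.
move=> zB zQ; have cF (i : 'I_#|ksets n m.+1|) : #|enum_val i| = m.+1.
  by have := enum_valP i; rewrite inE => /eqP.
have z_off (i : 'I_#|ksets n m.+1|) : v \notin enum_val i -> z 0 i = 0.
  move=> vF; have Sv : v |: enum_val i \in star by rewrite !inE cardsU1 vF cF !eqxx.
  move/rowP/(_ (enum_rank_in Sv (v |: enum_val i))): zQ.
  rewrite !mxE (bigD1 i) //= big1 ?addr0 => [|i' ne]; rewrite !mxE enum_rankK_in // setU1K //.
    by rewrite eqxx mulr1.
  by rewrite (inj_eq enum_val_inj) (negPf ne) mulr0.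
apply/rowP=> i; rewrite mxE; have [vF|] := boolP (v \in enum_val i); last exact: z_off.
have cFv : #|enum_val i :\ v| = m by rewrite card_setD1 // cF.
have Fv : enum_val i :\ v \in ksets n m by rewrite inE cFv.
move/rowP/(_ (enum_rank_in Fv (enum_val i :\ v))): zB.
rewrite !mxE (bigD1 i) //= big1 ?addr0 => [|i' ne]; rewrite !mxE enum_rankK_in //.
  by rewrite incidence_D1 // => /eqP; rewrite mulf_eq0 signr_eq0 orbF => /eqP.
have [vF'|/z_off->] := boolP (v \in enum_val i'); last by rewrite mul0r.
rewrite incidence_eq0 ?mulr0 //; apply: contra ne => sub.
apply/eqP/enum_val_inj; rewrite -(setD1K vF) -(setD1K vF'); congr (_ |: _).
apply/eqP; rewrite eq_sym eqEcard subsetD1 sub !inE eqxx /=.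
by rewrite card_setD1 // cF cFv.
Qed.

Lemma mxrank_mul_star_proj p (M : 'M[rat]_(p, #|ksets n m.+1|)) :
  (M <= kermx boundary_simplex)%MS -> \rank (M *m star_proj) = \rank M.
Proof.
move=> Mker; rewrite -[RHS](mxrank_mul_ker M star_proj).
suff /eqP-> : \rank (M :&: kermx star_proj)%MS == 0%N by rewrite addn0.
rewrite mxrank_eq0; apply/eqP/row_matrixP => i; rewrite row0; apply: star_proj_inj.
  apply/sub_kermxP; apply: submx_trans (row_sub _ _) _.
  exact: submx_trans (capmxSl _ _) Mker.
by apply/sub_kermxP; apply: submx_trans (row_sub _ _) (capmxSr _ _).
Qed.

Lemma rank_simplex_cycles : \rank (kermx boundary_simplex) = #|star|.
Proof.
apply/eqP; rewrite eqn_leq -{1}(mxrank_mul_star_proj (submx_refl _)) rank_leq_col /=.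
pose D := setmx star (ksets n m.+1) (@incidence n).
have DQ : D *m star_proj = diag_mx (\row_j incidence (enum_val j) (enum_val j :\ v)).
  rewrite mulmx_setmx; apply/matrixP=> i j; rewrite !mxE sum_mul_delta; last first.
    by rewrite inE card_kstar_D1 ?enum_valP.
  case: eqP => [->|nij]; first by rewrite mulr1n.
  rewrite mulr0n incidence_eq0 //; apply/negP=> sub; apply: nij; apply/enum_val_inj/eqP.
  case/kstarP: (enum_valP i) => ci vi; case/kstarP: (enum_valP j) => cj vj.
  by rewrite eq_sym eqEcard ci cj leqnn -(setD1K vj) subUset sub1set vi sub.
have DZ : (D <= kermx boundary_simplex)%MS.
  by apply/sub_kermxP/incidence_mulmx_eq0 => S /kstarP[cS _]; rewrite inE cS.
apply: leq_trans (mxrankS DZ); rewrite -(mxrank_mul_star_proj DZ) DQ.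
rewrite mxrank_unit // unitmxE det_diag unitfE; apply/prodf_neq0 => j _.
by rewrite mxE incidence_D1 ?signr_eq0 //; case/kstarP: (enum_valP j).
Qed.

End SimplexCycles.

Lemma mxrank_ker_diff (F : fieldType) p q r (A : 'M[F]_(q, r)) (B : 'M[F]_(p, q)) :
  (B <= kermx A)%MS -> \rank (kermx A :\: B)%MS = (\rank (kermx A) - \rank B)%N.
Proof.
move=> BA; rewrite -(mxrank_cap_compl (kermx A) B).
by rewrite (capmx_idPr BA) addKn.
Qed.

Section KGHomology.
Variables (n k : nat) (v : 'I_n) (G : {set {set 'I_n}}).
Hypothesis G_uniform : forall e, e \in G -> #|e| = k.+2.
Local Notation K := (KG k.+2 G).
Local Notation B := (setmx G (ksets n k.+1) (@incidence n)).

Lemma faces_KG_skeleton m : (m <= k.+1)%N -> faces_card K m = ksets n m.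
Proof.
move=> mk; apply/setP=> t; rewrite !inE.
by case: eqP => [->|]; rewrite ?mk ?andbF.
Qed.

Lemma faces_KG_top : faces_card K k.+2 = G.
Proof.
apply/setP=> t; rewrite !inE; have [tG|_] := boolP (t \in G).
  by rewrite orbT (G_uniform tG) eqxx.
by rewrite orbF; case: eqP => [->|]; rewrite ?ltnn ?andbF.
Qed.

Lemma faces_KG_over : faces_card K k.+3 = set0.
Proof.
apply/setP=> t; rewrite !inE; case: eqP => [ct|]; last by rewrite andbF.
have [/G_uniform|] := boolP (t \in G).
  by rewrite ct => /eqP; rewrite eqSS (gtn_eqF (ltnSn _)).
by rewrite ct ltnNge leqW.
Qed.

Lemma edges_boundary_cycles :
  (B <= kermx (setmx (ksets n k.+1) (ksets n k) (@incidence n)))%MS.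
Proof.
by apply/sub_kermxP/incidence_mulmx_eq0 => e /G_uniform ce; rewrite inE ce.
Qed.

Lemma rank_edges_boundary_le_star : (\rank B <= #|kstar k.+2 v|)%N.
Proof. by rewrite -(rank_simplex_cycles _ v) mxrankS ?edges_boundary_cycles. Qed.

Lemma rbetti_KG_skeleton : rbetti K k = (#|kstar k.+2 v| - \rank B)%N.
Proof.
rewrite /rbetti !boundaryE faces_KG_top !faces_KG_skeleton //.
by rewrite mxrank_ker_diff ?(rank_simplex_cycles _ v) ?edges_boundary_cycles.
Qed.

Lemma rbetti_KG_top : rbetti K k.+1 = (#|G| - \rank B)%N.
Proof.
have rank0 : \rank (boundary K k.+2) = 0%N.
  by apply/eqP; rewrite -leqn0 (leq_trans (rank_leq_row _)) // faces_KG_over cards0.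
rewrite /rbetti mxrank_ker_diff; last first.
  by move/eqP: rank0; rewrite mxrank_eq0 => /eqP->; rewrite sub0mx.
by rewrite rank0 subn0 mxrank_ker boundaryE faces_KG_top faces_KG_skeleton.
Qed.

End KGHomology.

Lemma nth_rem (T : eqType) (x0 x : T) s i :
  nth x0 (rem x s) i = nth x0 s (bump (index x s) i).
Proof.
elim: s i => [|y s IH] i /=; first by rewrite !nth_nil.
case: eqP => [->|_] /=; first by case: i.
by case: i => [|i] //=; rewrite IH bumpS.
Qed.

Lemma map_rem (T1 T2 : eqType) (f : T1 -> T2) x s :
  injective f -> map f (rem x s) = rem (f x) (map f s).
Proof.
by move=> inj_f; elim: s => //= y s IH; rewrite (inj_eq inj_f); case: eqP => //= _; rewrite IH.
Qed.

Section EnumSet.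
Variable n : nat.
Implicit Types (S T : {set 'I_n}) (a : 'I_n).
Local Notation ltv := (relpre (@nat_of_ord n) ltn).

Lemma ltv_trans : transitive ltv.
Proof. by move=> b c d; apply: ltn_trans. Qed.

Lemma sorted_enum_set S : sorted ltv (enum S).
Proof.
rewrite -sorted_map -[enum _](eq_filter (mem_enum _)).
rewrite -(eq_filter (mem_map val_inj _)) -filter_map.
by rewrite (sorted_filter ltn_trans) // unlock val_ord_enum iota_ltn_sorted.
Qed.

Lemma enum_setD1 S a : enum (S :\ a) = rem a (enum S).
Proof.
apply: (irr_sorted_eq ltv_trans) => [b|||b]; first exact: ltnn.
- exact: sorted_enum_set.
- by apply: (subseq_sorted ltv_trans (rem_subseq a (enum S))); apply: sorted_enum_set.
by rewrite mem_enum (mem_rem_uniq _ (enum_uniq _)) !inE mem_enum.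
Qed.

Lemma index_sorted_ltv (s : seq 'I_n) a : sorted ltv s -> a \in s ->
  index a s = count (fun b : 'I_n => (b < a)%N) s.
Proof.
elim: s => //= b s IH b_s; have /allP lt_bs := order_path_min ltv_trans b_s.
rewrite inE eq_sym; case: eqP => [<- _|_ /= a_s].
  rewrite ltnn add0n; apply/esym/eqP; rewrite -leqn0 leqNgt -has_count.
  by apply/hasPn => c /lt_bs /= /ltnW; rewrite leqNgt.
by rewrite IH ?(path_sorted b_s) //; have /= -> := lt_bs a a_s.
Qed.

Lemma index_enum_set S a : a \in S -> index a (enum S) = set_pos S a.
Proof.
move=> aS; rewrite index_sorted_ltv ?mem_enum ?sorted_enum_set //.
rewrite /set_pos cardE /enum_mem size_filter count_filter.
by apply: eq_count => b; rewrite !inE andbC.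
Qed.

Definition enum_nat S (i : nat) : nat := nth 0%N (map val (enum S)) i.

Lemma enum_nat_nth x0 S i : (i < #|S|)%N -> enum_nat S i = nth x0 (enum S) i.
Proof. by rewrite cardE => i_lt; rewrite /enum_nat (nth_map x0). Qed.

Lemma mem_enum_nth x0 S i : (i < #|S|)%N -> nth x0 (enum S) i \in S.
Proof. by rewrite cardE -mem_enum => /(mem_nth x0). Qed.

Lemma set_pos_nth x0 S i : (i < #|S|)%N -> set_pos S (nth x0 (enum S) i) = i.
Proof.
move=> i_lt; rewrite -index_enum_set ?mem_enum_nth // index_uniq ?enum_uniq //.
by rewrite -cardE.
Qed.

Lemma enum_nat_pos S a : a \in S -> enum_nat S (set_pos S a) = a.
Proof.
move=> aS; rewrite (enum_nat_nth a) -?index_enum_set ?nth_index ?mem_enum //.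
by rewrite cardE index_mem mem_enum.
Qed.

Lemma enum_nat_D1 S a i : a \in S ->
  enum_nat (S :\ a) i = enum_nat S (bump (set_pos S a) i).
Proof.
move=> aS; rewrite /enum_nat enum_setD1 map_rem; last exact: val_inj.
by rewrite nth_rem index_map ?index_enum_set //; apply: val_inj.
Qed.

Lemma enum_natP S i : (i < #|S|)%N -> exists2 a, a \in S & enum_nat S i = a.
Proof.
move=> lt_iS; have /card_gt0P[x0 _] : (0 < #|S|)%N by apply: leq_ltn_trans lt_iS.
by exists (nth x0 (enum S) i); rewrite ?mem_enum_nth ?(enum_nat_nth x0).
Qed.

End EnumSet.

Definition minor (R : pzRingType) n k (f : nat -> nat -> R) (S T : {set 'I_n}) : R :=
  \det (\matrix_(i < k, j < k) f (enum_nat S i) (enum_nat T j)).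

Lemma compound_entryE n k (S T : {set 'I_n}) : compound_entry k S T = minor k (@xvar n) S T.
Proof. by []. Qed.

Section Minors.
Variables (R : comNzRingType) (n : nat).
Implicit Types (f g : nat -> nat -> R) (S T : {set 'I_n}).

Lemma minor_laplace f k S T v : #|S| = k.+1 -> #|T| = k.+1 -> v \in S ->
  minor k.+1 f S T = (-1) ^+ set_pos S v *
    \sum_(t in T) (-1) ^+ set_pos T t * f v t * minor k f (S :\ v) (T :\ t).
Proof.
move=> cS cT vS; have pS : (set_pos S v < k.+1)%N.
  by rewrite -cS -index_enum_set // cardE index_mem mem_enum.
pose t_ j := nth v (enum T) j.
pose G j := (-1) ^+ (set_pos S v + j) * f v (t_ j) * minor k f (S :\ v) (T :\ t_ j).
transitivity (\sum_(j < k.+1) G j).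
  rewrite /minor (expand_det_row _ (Ordinal pS)); apply: eq_bigr => j _.
  have jT : (j < #|T|)%N by rewrite cT.
  rewrite /cofactor !mxE enum_nat_pos // (enum_nat_nth v jT) mulrCA mulrA.
  congr (_ * _ * \det _); apply/matrixP => i i'; rewrite !mxE.
  by rewrite !enum_nat_D1 ?mem_enum_nth ?set_pos_nth.
rewrite -(big_mkord xpredT G) -cT big_mkord big_distrr [RHS]big_enum_val /=.
apply: eq_bigr => j _; rewrite /G /t_ -enum_val_nth set_pos_nth -?cardE //.
by rewrite exprD !mulrA.
Qed.


Lemma eq_minor f g k S T : #|S| = k -> #|T| = k ->
  {in S & T, forall a b : 'I_n, f a b = g a b} -> minor k f S T = minor k g S T.
Proof.
move=> cS cT fg; congr (\det _); apply/matrixP=> i j; rewrite !mxE.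
have [|a aS ->] := @enum_natP _ S i; first by rewrite cS.
by have [|b bT ->] := @enum_natP _ T j; [rewrite cT | apply: fg].
Qed.

Lemma minor_tr f k S T : minor k f S T = minor k (fun a b => f b a) T S.
Proof. by rewrite /minor -det_tr; congr (\det _); apply/matrixP=> i j; rewrite !mxE. Qed.

Lemma minor_delta k S T : #|S| = k -> #|T| = k ->
  minor k (fun a b => (a == b)%:R) S T = (S == T)%:R :> R.
Proof.
move=> cS cT; have size_enum (X : {set 'I_n}) : size (map val (enum X)) = #|X|.
  by rewrite size_map -cardE.
have [<-|neST] := eqVneq S T.
  rewrite /minor -[RHS](det1 R k); congr (\det _); apply/matrixP=> i j; rewrite !mxE.
  by rewrite nth_uniq ?size_enum ?cS ?(map_inj_uniq val_inj) ?enum_uniq.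
have /subsetPn[a aS aT] : ~~ (S \subset T) by rewrite eqEcard cS cT leqnn andbT in neST.
have ak : (set_pos S a < k)%N by rewrite -cS -index_enum_set // cardE index_mem mem_enum.
have Sa : enum_nat S (Ordinal ak) = a by apply: enum_nat_pos.
rewrite /minor (expand_det_row _ (Ordinal ak)) big1 // => j _; rewrite !mxE Sa.
have [|b bT ->] := @enum_natP _ T j; first by rewrite cT.
by rewrite (inj_eq val_inj) eq_sym (negPf (memPn aT b bT)) mul0r.
Qed.

Lemma minor_map (R' : comNzRingType) (h : {rmorphism R -> R'}) f k S T :
  h (minor k f S T) = minor k (fun a b => h (f a b)) S T.
Proof. by rewrite /minor -det_map_mx; congr (\det _); apply/matrixP=> i j; rewrite !mxE. Qed.

End Minors.

Lemma mxrank_mxsub (F : fieldType) m1 m2 p1 p2 (f : 'I_p1 -> 'I_m1) (g : 'I_p2 -> 'I_m2)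
    (A : 'M[F]_(m1, m2)) :
  (\rank (mxsub f g A) <= \rank A)%N.
Proof.
have -> : mxsub f g A = (rowsub g (rowsub f A)^T)^T by apply/matrixP=> i j; rewrite !mxE.
rewrite mxrank_tr rowsubE (leq_trans (mxrankM_maxr _ _)) // mxrank_tr.
by rewrite rowsubE mxrankM_maxr.
Qed.

Lemma unit_mxsub_rank (F : fieldType) m1 m2 (A : 'M[F]_(m1, m2)) :
  exists f g, @mxsub _ _ _ (\rank A) (\rank A) f g A \in unitmx.
Proof.
pose f := maxrankfun A; have fullT : row_full (rowsub f A)^T.
  by rewrite /row_full mxrank_tr; apply: maxrowsub_free.
exists f, (fullrankfun fullT); rewrite -unitmx_tr.
suff -> : (mxsub f (fullrankfun fullT) A)^T = rowsub (fullrankfun fullT) (rowsub f A)^T.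
  exact: fullrowsub_unit.
by apply/matrixP=> i j; rewrite !mxE.
Qed.

Lemma unit_mxsub_le_rank (F : fieldType) m1 m2 p (f : 'I_p -> 'I_m1) (g : 'I_p -> 'I_m2)
    (A : 'M[F]_(m1, m2)) :
  mxsub f g A \in unitmx -> (p <= \rank A)%N.
Proof. by move/mxrank_unit <-; apply: mxrank_mxsub. Qed.

Lemma mxrank_map_le_tofrac (R : idomainType) (F : fieldType) (h : {rmorphism R -> F})
    m1 m2 (P : 'M[R]_(m1, m2)) :
  (\rank (map_mx h P) <= \rank (map_mx tofrac P))%N.
Proof.
have [f [g Uh]] := unit_mxsub_rank (map_mx h P).
apply: (unit_mxsub_le_rank (f := f) (g := g)); move: Uh.
rewrite -!map_mxsub !unitmxE !det_map_mx !unitfE tofrac_eq0.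
by apply: contraNneq => ->; rewrite rmorph0.
Qed.

Section StarMinors.
Variables (n k : nat) (v : 'I_n) (G : {set {set 'I_n}}).
Hypothesis G_uniform : forall e, e \in G -> #|e| = k.+2.
Local Notation star := (kstar k.+2 v).
Local Notation B := (setmx G (ksets n k.+1) (@incidence n)).

(* Laplace expansion along row [v] factors the minors through [B^T], up to nonzero
   diagonal scalings. *)
Lemma rank_star_minors_le (E : fieldType) (h : {rmorphism rat -> E}) (f : nat -> nat -> E) :
  (forall x : 'I_n, f v x != 0) ->
  (\rank (setmx star G (minor k.+2 f)) <= \rank B)%N.
Proof.
move=> fv_neq0.
pose W := setmx (ksets n k.+1) G
  (fun F T => \sum_(t in T) (F == T :\ t)%:R * ((-1) ^+ set_pos T t * f v t)).
have -> : setmx star G (minor k.+2 f) = setmx star (ksets n k.+1)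
    (fun S F => (-1) ^+ set_pos S v * minor k.+1 f (S :\ v) F) *m W.
  rewrite mulmx_setmx; apply: eq_setmx => S T /kstarP[cS vS] TG.
  rewrite (minor_laplace _ cS (G_uniform TG) vS) big_distrr /=.
  under [RHS]eq_bigr do rewrite big_distrr; rewrite [RHS]exchange_big /=.
  apply: eq_bigr => t tT; rewrite (eq_bigr (fun F => (-1) ^+ set_pos S v *
    minor k.+1 f (S :\ v) F * ((-1) ^+ set_pos T t * f v t) * (F == T :\ t)%:R)).
    by rewrite sum_mul_delta ?inE ?card_setD1 ?G_uniform //; ring.
  by move=> F _; ring.
pose d (A : {set 'I_n}) := \prod_(x in A) f v x.
have d_neq0 A : d A != 0 by apply/prodf_neq0 => x _.
have -> : W = setmx (ksets n k.+1) G (fun F T => ((d F)^-1 * h (incidence T F) * d T)%R).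
  apply: eq_setmx => F T; rewrite inE => /eqP cF TG.
  rewrite (incidence_sum (t := F)) ?(G_uniform TG) ?cF // rmorph_sum big_distrr big_distrl.
  apply: eq_bigr => t tT; rewrite rmorphM rmorphXn rmorphN1 rmorph_nat.
  have [->|_] := eqVneq F (T :\ t); last by rewrite !mulr0n /= !(mul0r, mulr0).
  rewrite /d (big_setD1 t tT) /=.
  by have := d_neq0 (T :\ t); rewrite /d; move: (\prod_(x in _) _) => P P_neq0; field.
apply: leq_trans (mxrankM_maxr _ _) _.
apply: leq_trans
  (mxrank_setmx_scale _ _ (fun F T => h (incidence T F)) (fun F => (d F)^-1) d) _.
have -> : setmx (ksets n k.+1) G (fun F T => h (incidence T F)) = map_mx h B^T.
  by rewrite trmx_setmx map_setmx.
by rewrite mxrank_map mxrank_tr.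
Qed.

(* The specialisation of [X] at which the minors on [star * G] become the entries
   of [B *m star_proj], up to sign. *)
Definition star_point (i j : nat) : rat := if i == v then 1 else (i == j)%:R.

Lemma rank_star_point_minors_ge :
  (\rank B <= \rank (setmx star G (minor k.+2 star_point)))%N.
Proof.
rewrite -(mxrank_mul_star_proj v (edges_boundary_cycles G_uniform)) -mxrank_tr.
have -> : (B *m star_proj k v)^T = setmx star G
    (fun S T => ((-1) ^+ set_pos S v * minor k.+2 star_point S T * 1)%R).
  rewrite mulmx_setmx trmx_setmx; apply: eq_setmx => S T SS TG.
  have [cS vS] := kstarP SS; have cSv := card_kstar_D1 SS.
  rewrite sum_mul_delta ?inE ?cSv // (minor_laplace _ cS (G_uniform TG) vS).
  rewrite mulr1 mulrA -expr2 sqrr_sign mul1r (incidence_sum (t := S :\ v)); last first.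
    by rewrite G_uniform ?cSv.
  apply: eq_bigr => t tT; rewrite {1}/star_point eqxx mulr1.
  have cTt : #|T :\ t| = k.+1 by rewrite card_setD1 // G_uniform.
  rewrite (eq_minor (g := fun a b => (a == b)%:R)) ?minor_delta ?cSv ?cTt //.
  move=> a b; rewrite !inE => /andP[av _] _.
  by rewrite /star_point (inj_eq val_inj) (negPf av).
exact: (mxrank_setmx_scale _ _ _ (fun S => (-1) ^+ set_pos S v) (fun _ => 1 : rat)).
Qed.

Lemma rank_star_minors (R : idomainType) (c : {rmorphism rat -> R})
    (e : {rmorphism R -> rat}) (p : nat -> nat -> R) :
  (forall i j : 'I_n, e (p i j) = star_point i j) ->
  \rank (setmx star G (minor k.+2 (fun i j => tofrac (p i j)))) = \rank B.
Proof.
move=> ep; apply/eqP; rewrite eqn_leq; apply/andP; split.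
  apply: (rank_star_minors_le (tofrac \o c)) => x; rewrite /= tofrac_eq0.
  apply/eqP => p0; have := ep v x; rewrite p0 rmorph0 /star_point eqxx => /eqP.
  by rewrite eq_sym oner_eq0.
have -> : setmx star G (minor k.+2 (fun i j => tofrac (p i j))) =
    map_mx tofrac (setmx star G (minor k.+2 p)).
  by rewrite map_setmx; apply: eq_setmx => S T _ _; rewrite minor_map.
apply: leq_trans rank_star_point_minors_ge (leq_trans _ (mxrank_map_le_tofrac e _)).
rewrite map_setmx; apply/eq_leq/congr1/eq_setmx => S T /kstarP[cS _] TG.
by rewrite minor_map; apply: eq_minor => [||a b _ _]; rewrite ?cS ?(G_uniform TG) ?ep.
Qed.

End StarMinors.

Lemma meval_mvar_pair n (a : nat -> nat -> rat) (i j : 'I_n) :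
  meval (fun l => a (l %/ n)%N (l %% n)%N) (mvar (n * n) (i * n + j)) = a i j.
Proof.
have n_gt0 : (0 < n)%N by apply: leq_ltn_trans (ltn_ord i).
rewrite meval_mvar ?divnMDl ?modnMDl ?divn_small ?modn_small ?addn0 //.
rewrite (leq_trans (_ : _ < i.+1 * n)%N) ?leq_mul2r ?ltn_ord ?orbT //.
by rewrite mulSn addnC ltn_add2r.
Qed.

Section CompoundStar.
Variables (n k : nat) (v : 'I_n) (G : {set {set 'I_n}}).
Hypothesis G_uniform : forall e, e \in G -> #|e| = k.+2.
Local Notation star := (kstar k.+2 v).
Local Notation B := (setmx G (ksets n k.+1) (@incidence n)).

Lemma rank_compound_star_edges : \rank (compound_submx k.+2 star G) = \rank B.
Proof.
exact: (rank_star_minors G_uniform (mconst (n * n))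
  (e := @meval (fun l => star_point v (l %/ n)%N (l %% n)%N) (n * n))
  (p := fun i j => mvar (n * n) (i * n + j)) (meval_mvar_pair (star_point v))).
Qed.

(* [C_k(X)^T = C_k(X^T)], and [X^T] is again a generic matrix. *)
Lemma rank_compound_edges_star : \rank (compound_submx k.+2 G star) = \rank B.
Proof.
have -> : compound_submx k.+2 G star = (setmx star G
    (minor k.+2 (fun i j => tofrac (mvar (n * n) (j * n + i)))))^T.
  by apply/matrixP=> i j; rewrite !mxE compound_entryE minor_tr.
rewrite mxrank_tr; exact: (rank_star_minors G_uniform (mconst (n * n))
  (e := @meval (fun l => star_point v (l %% n)%N (l %/ n)%N) (n * n))
  (p := fun i j => mvar (n * n) (j * n + i))
  (fun i j => meval_mvar_pair (fun i j => star_point v j i) j i)).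
Qed.

End CompoundStar.

Lemma eq_iff_subn_eq0 r m : (r <= m)%N -> r = m <-> (m - r = 0)%N.
Proof.
move=> le_rm; split=> [->|/eqP]; first exact: subnn.
by rewrite subn_eq0 => le_mr; apply/eqP; rewrite eqn_leq le_rm.
Qed.

Unset Implicit Arguments.

Theorem mainTheorem3 (n k : nat) (G : {set {set 'I_n}}) (v : 'I_n) :
  (2 <= k)%N ->
  (forall e, e \in G -> #|e| = k) ->
  (dominates k G (kstar k v) <-> rbetti (KG k G) (k - 2) = 0%N) /\
  (dominates k (kstar k v) G <-> rbetti (KG k G) (k - 1) = 0%N).
Proof.
case: k => [|[|k]] // _ G_uniform; rewrite !subSS !subn0.
rewrite /dominates rank_compound_star_edges // rank_compound_edges_star //.
rewrite (rbetti_KG_skeleton v G_uniform) (rbetti_KG_top G_uniform).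
split; apply: eq_iff_subn_eq0; [exact: rank_edges_boundary_le_star | exact: rank_leq_row].
Qed.
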